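(* For every $f:\{0,1\}^n\to\{0,1\}$ and all sets $J\subseteq K\subseteq[n]$, $\mathrm{SymInf}_f(J)\le\mathrm{SymInf}_f(K)$.
   Context: $\mathcal{S}_J$ is the set of permutations of $[n]$ fixing every element outside $J$; $\pi x$ is the vector whose $\pi(i)$-th coordinate is $x_i$. $\mathrm{SymInf}_f(J)=\Pr_{x,\pi}[f(x)\ne f(\pi x)]$ with $x$ uniform in $\{0,1\}^n$ and $\pi$ uniform in $\mathcal{S}_J$. *)

From mathcomp Require Import all_boot all_order all_fingroup all_algebra.
Set Implicit Arguments. Unset Strict Implicit. Unset Printing Implicit Defensive.
Import GRing.Theory Num.Theory.

Definition cube (n : nat) := {ffun 'I_n -> bool}.

Definition SymGroup (n : nat) (J : {set 'I_n}) : {set {perm 'I_n}} :=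
  [set s : {perm 'I_n} | perm_on J s].

(* pi x : the vector whose pi(i)-th coordinate is x_i, i.e. (pi x)_j = x_{pi^-1 j}. *)
Definition perm_act (n : nat) (s : {perm 'I_n}) (x : cube n) : cube n :=
  [ffun j => x ((s^-1)%g j)].

Definition SymInf (n : nat) (f : cube n -> bool) (J : {set 'I_n}) : rat :=
  (#|[set p : cube n * {perm 'I_n} |
        (p.2 \in SymGroup J) && (f p.1 != f (perm_act p.2 p.1))]|%:R
   / (#|[set: cube n]| * #|SymGroup J|)%:R)%R.

(* Encode f by the sign function s = (-1)^f, so that [f x != f y] = (1 - s x s y)/2.
   For a group G of coordinate permutations, averaging over G and using the group
   structure gives 1 - 2 SymInf_f = |avg_G s|^2, where avg_G s x is the mean of s
   over the G-orbit of x.  When G <= H, avg_H s is an H-average of translates of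
   avg_G s, so by Cauchy-Schwarz (and H-invariance of the uniform measure on the
   cube) |avg_H s|^2 <= |avg_G s|^2.  Apply this to G = S_J <= S_K = H. *)

From mathcomp Require Import all_boot all_order all_fingroup all_algebra.
From mathcomp Require Import ring lra.
Import Order.TTheory GRing.Theory Num.Theory.
Local Open Scope ring_scope.

Lemma sqr_sum_le_card_sum_sqr (R : realDomainType) (I : finType) (A : {pred I})
    (u : I -> R) :
  (\sum_(i in A) u i) ^+ 2 <= #|A|%:R * \sum_(i in A) u i ^+ 2.
Proof.
have sq_diff_ge0 : 0 <= \sum_(i in A) \sum_(j in A) (u i - u j) ^+ 2.
  by apply: sumr_ge0 => i _; apply: sumr_ge0 => j _; apply: sqr_ge0.
have diag_l : \sum_(i in A) \sum_(j in A) u i ^+ 2 = #|A|%:R * \sum_(i in A) u i ^+ 2.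
  by under eq_bigr => i _ do rewrite sumr_const -mulr_natl; rewrite -mulr_sumr.
have diag_r : \sum_(i in A) \sum_(j in A) u j ^+ 2 = #|A|%:R * \sum_(i in A) u i ^+ 2.
  by rewrite sumr_const mulr_natl.
have cross : \sum_(i in A) \sum_(j in A) (u i * u j) = (\sum_(i in A) u i) ^+ 2.
  by rewrite expr2 mulr_suml; apply: eq_bigr => i _; rewrite mulr_sumr.
have expand : \sum_(i in A) \sum_(j in A) (u i - u j) ^+ 2 =
    \sum_(i in A) \sum_(j in A) u i ^+ 2 + \sum_(i in A) \sum_(j in A) u j ^+ 2
    - 2 * \sum_(i in A) \sum_(j in A) (u i * u j).
  rewrite mulr_sumr -big_split -sumrB; apply: eq_bigr => i _.
  rewrite mulr_sumr -big_split -sumrB; apply: eq_bigr => j _.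
  by rewrite /=; ring.
by move: sq_diff_ge0; rewrite expand diag_l diag_r cross; lra.
Qed.

Section CoordinatePermutations.
Context {n : nat}.
Implicit Types (x : cube n) (s t : {perm 'I_n}).

Lemma perm_actM s t x : perm_act t (perm_act s x) = perm_act (s * t)%g x.
Proof. by apply/ffunP => j; rewrite !ffunE invMg permM. Qed.

Lemma perm_act1 x : perm_act 1%g x = x.
Proof. by apply/ffunP => j; rewrite !ffunE invg1 perm1. Qed.

Lemma perm_actK s : cancel (perm_act s) (perm_act s^-1%g).
Proof. by move=> x; rewrite perm_actM mulgV perm_act1. Qed.

Lemma perm_act_inj s : injective (perm_act s).
Proof. exact: can_inj (perm_actK s). Qed.

Lemma sum_perm_act (R : nmodType) s (F : cube n -> R) :
  \sum_x F (perm_act s x) = \sum_x F x.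
Proof. by rewrite [RHS](reindex_inj (perm_act_inj s)). Qed.

Lemma card_cube_gt0 : (0 < #|[set: cube n]|)%N.
Proof. by apply/card_gt0P; exists [ffun=> false]; rewrite inE. Qed.

Lemma SymGroupE (J : {set 'I_n}) : SymGroup J = Sym J.
Proof. by []. Qed.

End CoordinatePermutations.

Section SymmetricInfluence.
Variables (n : nat) (f : cube n -> bool).
Implicit Types (x : cube n) (G H : {group {perm 'I_n}}).

Definition sign_of x : rat := (-1) ^+ f x.

Definition orbit_sum G x := \sum_(g in G) sign_of (perm_act g x).

Definition orbit_energy G := \sum_x orbit_sum G x ^+ 2.

Lemma disagree_sign x y :
  ((f x != f y)%:R : rat) = (1 - sign_of x * sign_of y) / 2.
Proof. by rewrite /sign_of; case: (f x); case: (f y) => /=; field. Qed.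

Lemma orbit_energyE G :
  orbit_energy G = #|G|%:R * \sum_x \sum_(g in G) sign_of x * sign_of (perm_act g x).
Proof.
rewrite /orbit_energy /orbit_sum.
under eq_bigr => x _ do rewrite expr2 mulr_suml.
rewrite exchange_big /= mulr_natl -sumr_const; apply: eq_bigr => g1 g1G.
rewrite (reindex_inj (perm_act_inj g1^-1%g)); apply: eq_bigr => y _.
rewrite mulr_sumr perm_actM mulVg perm_act1.
rewrite (reindex_inj (mulgI g1)) /=.
apply: eq_big => [g | g _]; first exact: groupMl.
by rewrite perm_actM mulgA mulVg mul1g.
Qed.

Lemma orbit_sum_sub G H x : G \subset H ->
  #|G|%:R * orbit_sum H x = \sum_(h in H) orbit_sum G (perm_act h x).
Proof.
move=> sGH; rewrite /orbit_sum mulr_natl -sumr_const.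
under [RHS]eq_bigr => h _ do under eq_bigr => g _ do rewrite perm_actM.
rewrite [RHS]exchange_big /=; apply: eq_bigr => g gG.
have gH : g \in H := subsetP sGH g gG.
rewrite [RHS](reindex_inj (mulIg g^-1%g)) /=.
apply: eq_big => [h | h _]; first by rewrite groupMr ?groupV.
by rewrite -mulgA mulVg mulg1.
Qed.

Lemma orbit_energy_sub G H : G \subset H ->
  #|G|%:R ^+ 2 * orbit_energy H <= #|H|%:R ^+ 2 * orbit_energy G.
Proof.
move=> sGH; rewrite /orbit_energy mulr_sumr.
under eq_bigr => x _ do rewrite -exprMn orbit_sum_sub //.
apply: (@le_trans _ _ (\sum_x #|H|%:R *
    \sum_(h in H) orbit_sum G (perm_act h x) ^+ 2)).
  by apply: ler_sum => x _; apply: sqr_sum_le_card_sum_sqr.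
rewrite -mulr_sumr exchange_big /=.
under eq_bigr => h _ do rewrite (sum_perm_act _ h (fun x => orbit_sum G x ^+ 2)).
by rewrite sumr_const -[(\sum_x _) *+ _]mulr_natr mulrCA -expr2 mulrC.
Qed.

Definition orbit_correlation G :=
  orbit_energy G / (#|[set: cube n]|%:R * #|G|%:R ^+ 2).

Lemma orbit_correlation_sub G H : G \subset H ->
  orbit_correlation H <= orbit_correlation G.
Proof.
move=> /orbit_energy_sub le_energy; rewrite /orbit_correlation.
have N_gt0 : 0 < (#|[set: cube n]|%:R : rat) by rewrite ltr0n card_cube_gt0.
have [G_gt0 H_gt0] : 0 < (#|G|%:R : rat) /\ 0 < (#|H|%:R : rat).
  by split; rewrite ltr0n cardG_gt0.
rewrite ler_pdivrMr ?mulr_gt0 ?exprn_gt0 // mulrAC ler_pdivlMr ?mulr_gt0 ?exprn_gt0 //.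
rewrite [_ * (_ * #|G|%:R ^+ 2)]mulrCA [_ * (_ * #|H|%:R ^+ 2)]mulrCA.
by rewrite ler_pM2l // mulrC [X in _ <= X]mulrC.
Qed.

Lemma SymInfE (J : {set 'I_n}) :
  SymInf f J = (1 - orbit_correlation (Sym_group J)) / 2.
Proof.
rewrite /SymInf /orbit_correlation orbit_energyE SymGroupE.
set G := Sym_group J.
have -> : #|[set p : cube n * {perm 'I_n} |
              (p.2 \in G) && (f p.1 != f (perm_act p.2 p.1))]|%:R
          = \sum_x \sum_(g in G) ((f x != f (perm_act g x))%:R : rat).
  rewrite -sum1_card natr_sum pair_big /= [RHS]big_mkcond [LHS]big_mkcond /=.
  by apply: eq_bigr => p _; rewrite inE; case: (_ \in _); case: (f _ != f _).
under eq_bigr => x _ do under eq_bigr => g _ do rewrite disagree_sign.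
under eq_bigr => x _ do rewrite -mulr_suml sumrB sumr_const.
rewrite -mulr_suml sumrB (eq_bigl (fun x => x \in [set: cube n])) => [|x]; last by rewrite inE.
have N_neq0 : (#|[set: cube n]|%:R : rat) != 0 by rewrite pnatr_eq0 -lt0n card_cube_gt0.
have G_neq0 : (#|G|%:R : rat) != 0 by rewrite pnatr_eq0 -lt0n cardG_gt0.
by rewrite sumr_const natrM -mulr_natr; field; rewrite N_neq0 G_neq0.
Qed.

End SymmetricInfluence.

Theorem lemma4 (n : nat) (f : cube n -> bool) (J K : {set 'I_n}) :
  J \subset K -> (SymInf f J <= SymInf f K)%R.
Proof.
move=> sJK; rewrite !SymInfE ler_pM2r ?invr_gt0 // lerD2l lerN2.
apply: orbit_correlation_sub; apply/subsetP => s.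
by rewrite !inE => /subset_trans; apply.
Qed.
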